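(* Let $n\ge 2$ be an integer and $A\subseteq L_n$. If $(X_n,\tau(A))$ is normal or countably paracompact, then $L_n\setminus A$ does not contain a closed uncountable subset of $(L_n,\tau_E|_{L_n})$.
   Context: For $\overline{x},\overline{a}\in\mathbb R^n$ let $|\overline{x}-\overline{a}|$ be the Euclidean distance and $B(\overline{a},\epsilon)=\{\overline{x}\in\mathbb R^n:|\overline{x}-\overline{a}|<\epsilon\}$. Let $P_n=\{\overline{x}\in\mathbb R^n: x_n>0\}$, $L_n=\{\overline{x}\in\mathbb R^n: x_n=0\}$, $X_n=P_n\cup L_n$, and let $\tau_E$ denote the Euclidean topology on $X_n$. For $\overline{a}\in L_n$ and $\epsilon>0$ put $\overline{a(\epsilon)}=(a_1,\dots,a_{n-1},\epsilon)$ and $\tilde B(\overline{a},\epsilon)=\{\overline{a}\}\cup B(\overline{a(\epsilon)},\epsilon)$. For $A\subseteq L_n$, the topology $\tau(A)$ on $X_n$ is generated by the local bases: at $\overline{a}\in P_n$, the sets $B(\overline{a},\epsilon)$ with $0<\epsilon<a_n$; at $\overline{a}\in A$, the sets $B(\overline{a},\epsilon)\cap X_n$ with $\epsilon>0$; at $\overline{a}\in L_n\setminus A$, the sets $\tilde B(\overline{a},\epsilon)$ with $\epsilon>0$. *)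

From Stdlib Require Import Reals.
From mathcomp Require Import all_boot.
Set Implicit Arguments. Unset Strict Implicit. Unset Printing Implicit Defensive.

Local Open Scope R_scope.

Definition pt (n : nat) := 'I_n -> R.

Definition edist (n : nat) (x a : pt n) : R :=
  sqrt (\big[Rplus/0]_(i < n) ((x i - a i) ^ 2)).

Definition eball (n : nat) (a : pt n) (eps : R) : pt n -> Prop :=
  fun x => edist x a < eps.

Definition lastc (n : nat) : pt n -> R :=
  match n return pt n -> R with
  | 0 => fun _ => 0
  | m.+1 => fun x => x ord_max
  end.

Definition Pn (n : nat) (x : pt n) : Prop := 0 < lastc x.
Definition Ln (n : nat) (x : pt n) : Prop := lastc x = 0.
Definition Xn (n : nat) (x : pt n) : Prop := Pn x \/ Ln x.

Definition lift_pt (n : nat) (a : pt n) (eps : R) : pt n :=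
  fun i => if (i : nat) == n.-1 then eps else a i.

Definition tball (n : nat) (a : pt n) (eps : R) : pt n -> Prop :=
  fun x => x = a \/ eball (lift_pt a eps) eps x.

Definition has_basic_nbhd (n : nat) (A : pt n -> Prop) (a : pt n)
    (U : pt n -> Prop) : Prop :=
  (Pn a /\ exists eps, 0 < eps /\ eps < lastc a /\
     (forall x, eball a eps x -> U x))
  \/ (Ln a /\ A a /\ exists eps, 0 < eps /\
     (forall x, eball a eps x -> Xn x -> U x))
  \/ (Ln a /\ ~ A a /\ exists eps, 0 < eps /\
     (forall x, tball a eps x -> U x)).

Definition tau_open (n : nat) (A : pt n -> Prop) (U : pt n -> Prop) : Prop :=
  (forall x, U x -> Xn x) /\ (forall a, U a -> has_basic_nbhd A a U).

Definition tau_closed (n : nat) (A : pt n -> Prop) (C : pt n -> Prop) : Prop :=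
  (forall x, C x -> Xn x) /\ tau_open A (fun x => Xn x /\ ~ C x).

Definition disjoint_sets (n : nat) (E F : pt n -> Prop) : Prop :=
  forall x, E x -> F x -> False.

(* (X_n, tau(A)) is normal: disjoint closed sets have disjoint open
   neighbourhoods (the space is T1 anyway) *)
Definition tau_normal (n : nat) (A : pt n -> Prop) : Prop :=
  forall E F, tau_closed A E -> tau_closed A F -> disjoint_sets E F ->
  exists U V, tau_open A U /\ tau_open A V /\
    (forall x, E x -> U x) /\ (forall x, F x -> V x) /\ disjoint_sets U V.

(* (X_n, tau(A)) is countably paracompact: every countable open cover has
   a locally finite open refinement (family of sets given as a predicate
   on sets) *)
Definition tau_countably_paracompact (n : nat) (A : pt n -> Prop) : Prop :=
  forall U : nat -> (pt n -> Prop),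
    (forall k, tau_open A (U k)) ->
    (forall x, Xn x -> exists k, U k x) ->
    exists W : (pt n -> Prop) -> Prop,
      (forall V, W V -> tau_open A V) /\
      (forall V, W V -> exists k, forall x, V x -> U k x) /\
      (forall x, Xn x -> exists V, W V /\ V x) /\
      (forall x, Xn x -> exists O, tau_open A O /\ O x /\
         exists l : list (pt n -> Prop),
           forall V, W V -> (exists y, O y /\ V y) -> List.In V l).

Definition eclosed_in_Ln (n : nat) (C : pt n -> Prop) : Prop :=
  (forall x, C x -> Ln x) /\
  forall x, Ln x -> ~ C x ->
    exists eps, 0 < eps /\ forall y, Ln y -> edist y x < eps -> ~ C y.

Definition countable_set (n : nat) (C : pt n -> Prop) : Prop :=
  exists f : pt n -> nat, forall x y, C x -> C y -> f x = f y -> x = y.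

(* Every subset of C
   is tau(A)-closed, and a tau(A)-open set containing a point of C contains a
   tangent ball at it.  Fix a countable set D = {d_j} of condensation points of C,
   dense among them.  Separating D from C \ D (normality), or refining the cover by
   the complements of the tails {d_j | j >= k} (countable paracompactness), yields
   radii delta_j such that every y in C \ D has a tangent ball meeting only finitely
   many of the tangent balls B_j at d_j of radius delta_j.  But tangent balls at
   points of L_n whose distance is small compared to both radii always meet, and a
   Baire category argument inside C produces a point of C \ D near which the B_j
   are not locally finite. *)

From HB Require Import structures.
From Stdlib Require Import Reals Lra ClassicalEpsilon Classical FunctionalExtensionality.
From mathcomp Require Import all_boot zify.
Set Implicit Arguments. Unset Strict Implicit. Unset Printing Implicit Defensive.
Local Open Scope R_scope.

HB.instance Definition _ := Monoid.isComLaw.Build R 0 Rplus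
  (fun a b c => esym (Rplus_assoc a b c)) Rplus_comm Rplus_0_l.
HB.instance Definition _ := SemiGroup.isComLaw.Build R Rmax Rmax_assoc Rmax_comm.
HB.instance Definition _ := SemiGroup.isComLaw.Build R Rmin Rmin_assoc Rmin_comm.

Lemma dependent_choice (T : Type) (P : nat -> T -> Prop) (Q : nat -> T -> T -> Prop) x0 :
  P 0%N x0 -> (forall s x, P s x -> exists y, P s.+1 y /\ Q s x y) ->
  exists u : nat -> T, forall s, P s (u s) /\ Q s (u s) (u s.+1).
Proof.
move=> P_x0 step.
have [f fP] : exists f : nat * T -> T,
    forall sx, P sx.1 sx.2 -> P sx.1.+1 (f sx) /\ Q sx.1 sx.2 (f sx).
  apply: (choice (fun sx y => P sx.1 sx.2 -> P sx.1.+1 y /\ Q sx.1 sx.2 y)) => [[s x]].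
  case: (classic (P s x)) => [/step [y Py] | nPx]; first by exists y.
  by exists x0.
pose u := fix u s := if s is s'.+1 then f (s', u s') else x0.
have Pu s : P s (u s) by elim: s => //= s IHs; case: (fP (s, u s) IHs).
by exists u => s; split=> //; case: (fP (s, u s) (Pu s)).
Qed.


Lemma list_bound (T : Type) (l : list T) (P : T -> nat -> Prop) :
  (forall V, List.In V l -> exists k, P V k) ->
  exists K, forall V, List.In V l -> exists k, (k <= K)%N /\ P V k.
Proof.
elim: l => [|V l IHl] l_P; first by exists 0%N.
have [k Pk] := l_P V (or_introl erefl).
have [K KP] := IHl (fun W lW => l_P W (or_intror lW)).
exists (maxn k K) => W /= [<- | /KP [k' [le_k'K Pk']]].
- by exists k; split=> //; apply: leq_maxl.
- by exists k'; split=> //; apply: leq_trans le_k'K (leq_maxr k K).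
Qed.


Lemma sumR_ge0 k (F : 'I_k -> R) :
  (forall i, 0 <= F i) -> 0 <= \big[Rplus/0]_(i < k) F i.
Proof. by move=> F_ge0; apply: big_ind => // *; [lra | apply: Rplus_le_le_0_compat]. Qed.

Lemma sumR_ge_term k (F : 'I_k -> R) i :
  (forall i, 0 <= F i) -> F i <= \big[Rplus/0]_(i < k) F i.
Proof.
move=> F_ge0; rewrite (bigD1 i) //= -{1}(Rplus_0_r (F i)).
by apply: Rplus_le_compat_l; apply: big_ind => // *; [lra | apply: Rplus_le_le_0_compat].
Qed.

Lemma sumR_le_const k (F : 'I_k -> R) c :
  (forall i, F i <= c) -> \big[Rplus/0]_(i < k) F i <= INR k * c.
Proof.
elim: k F => [|k IHk] F F_le; first by rewrite big_ord0 /= Rmult_0_l; lra.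
rewrite big_ord_recr S_INR.
have /= := IHk (fun i => F (widen_ord (leqnSn k) i)) (fun i => F_le _).
have := F_le ord_max; lra.
Qed.

Lemma exists_inv_succ_lt eps : 0 < eps -> exists s : nat, / INR s.+1 < eps.
Proof.
move=> eps_gt0; have [N [N_lt N_gt0]] := archimed_cor1 eps eps_gt0.
by exists N.-1; rewrite prednK //; apply/ltP.
Qed.

Lemma inv_succ_gt0 s : 0 < / INR s.+1.
Proof. by apply: Rinv_0_lt_compat; apply: lt_0_INR; lia. Qed.

Lemma inv_succ_le s t : (s <= t)%N -> / INR t.+1 <= / INR s.+1.
Proof.
by move=> le_st; apply: Rinv_le_contravar; [apply: lt_0_INR | apply: le_INR]; lia.
Qed.

Lemma exists_pos_lt2 a b : 0 < a -> 0 < b -> exists r, 0 < r /\ r < a /\ r < b.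
Proof.
move=> a_gt0 b_gt0; exists (Rmin a b / 2).
have := Rmin_l a b; have := Rmin_r a b; have := Rmin_pos a b a_gt0 b_gt0; lra.
Qed.


(* The sup metric: its triangle inequality is elementary and its balls with rational
   data are easy to code; [edist_le_sd] transfers back to the Euclidean metric. *)
Definition sd n (x y : pt n) : R := \big[Rmax/0]_(i < n) Rabs (x i - y i).

Definition sball n (c : pt n) (r : R) : pt n -> Prop := fun z => sd z c < r.

Section SupMetric.
Variable n : nat.
Implicit Types x y z : pt n.

Lemma sd_ge0 x y : 0 <= sd x y.
Proof.
apply: (big_ind (fun v => 0 <= v)) => [|a b a_ge0 _|i _]; first lra.
- exact: Rle_trans a_ge0 (Rmax_l a b).
- exact: Rabs_pos.
Qed.

Lemma sd_ge_coord x y i : Rabs (x i - y i) <= sd x y.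
Proof. by rewrite /sd (bigD1 i) //=; apply: Rmax_l. Qed.

Lemma sd_le x y r :
  0 <= r -> (forall i, Rabs (x i - y i) <= r) -> sd x y <= r.
Proof. by move=> r_ge0 xy_le; apply: (big_ind (fun v => v <= r)) => // *; apply: Rmax_lub.
Qed.

Lemma sd_lt x y r :
  0 < r -> (forall i, Rabs (x i - y i) < r) -> sd x y < r.
Proof. by move=> r_gt0 xy_lt; apply: (big_ind (fun v => v < r)) => // *; apply: Rmax_lub_lt.
Qed.

Lemma sd_sym x y : sd x y = sd y x.
Proof.
by apply: Rle_antisym; apply: sd_le (sd_ge0 _ _) _ => i;
  rewrite Rabs_minus_sym; apply: sd_ge_coord.
Qed.

Lemma sd_triangle x y z : sd x z <= sd x y + sd y z.
Proof.
apply: sd_le => [|i]; first by have := sd_ge0 x y; have := sd_ge0 y z; lra.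
have := Rabs_triang (x i - y i) (y i - z i).
have := sd_ge_coord x y i; have := sd_ge_coord y z i.
have -> : x i - y i + (y i - z i) = x i - z i by ring.
lra.
Qed.

Lemma sd_gt0 x y : x <> y -> 0 < sd x y.
Proof.
move=> neq_xy; case: (Rle_lt_dec (sd x y) 0) => // sd_le0.
case: neq_xy; apply: functional_extensionality => i.
have := sd_ge_coord x y i; have := Rabs_pos (x i - y i).
rewrite /Rabs; case: Rcase_abs; lra.
Qed.

Lemma sd_refl x : sd x x = 0.
Proof.
apply: Rle_antisym (sd_ge0 x x); apply: sd_le => [|i]; first lra.
by rewrite Rminus_diag Rabs_R0; lra.
Qed.

Lemma edist_ge_coord x y i : Rabs (x i - y i) <= edist x y.
Proof.
rewrite /edist -sqrt_Rsqr_abs; apply: sqrt_le_1_alt.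
have := sumR_ge_term i (fun i => pow2_ge_0 (x i - y i)).
by rewrite /Rsqr /=; lra.
Qed.

Lemma edist_le_sd x y : edist x y <= INR n * sd x y.
Proof.
have n_ge0 := pos_INR n; have sd0 := sd_ge0 x y.
have sq_le i : (x i - y i) ^ 2 <= sd x y ^ 2.
  rewrite -(pow2_abs (x i - y i)); have := Rabs_pos (x i - y i).
  have := sd_ge_coord x y i; nra.
have n_le_sq : INR n <= INR n ^ 2.
  case: (posnP n) => [-> /= | n_gt0]; first lra.
  have /le_INR : (1 <= n)%coq_nat by apply/leP.
  rewrite /=; nra.
rewrite /edist -(sqrt_pow2 (INR n * sd x y)); last exact: Rmult_le_pos.
apply: sqrt_le_1_alt; apply: Rle_trans (sumR_le_const sq_le) _.
have : 0 <= sd x y ^ 2 by apply: pow2_ge_0.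
nra.
Qed.

End SupMetric.

Section Countability.
Variable n : nat.
Implicit Types S T : pt n -> Prop.

Lemma countable_sub S T : countable_set S -> (forall x, T x -> S x) -> countable_set T.
Proof. by move=> [f f_inj] TS; exists f => x y /TS Sx /TS Sy; apply: f_inj. Qed.

Lemma countable_empty S : (forall x, ~ S x) -> countable_set S.
Proof. by move=> S0; exists (fun=> 0%N) => x y /S0. Qed.

Lemma countable_range (d : nat -> pt n) : countable_set (fun z => exists i, z = d i).
Proof.
exists (fun z => epsilon (inhabits 0%N) (fun i => z = d i)) => x y x_d y_d exy.
have := epsilon_spec (inhabits 0%N) _ y_d; rewrite -exy => ->.
exact: epsilon_spec (inhabits 0%N) _ x_d.
Qed.

Lemma countable_bigcup (I : countType) S (U : I -> pt n -> Prop) :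
  (forall x, S x -> exists i, U i x) ->
  (forall i, countable_set (fun x => S x /\ U i x)) -> countable_set S.
Proof.
move=> S_cover U_cnt.
case: (classic (exists x, S x)) => [[x0 /S_cover [i0 _]] | S0]; last first.
  by apply: countable_empty => x Sx; apply: S0; exists x.
have [idx idxP] : exists idx : pt n -> I, forall x, S x -> U (idx x) x.
  apply: (choice (fun x i => S x -> U i x)) => x.
  case: (classic (S x)) => [/S_cover [i Ui] | nSx].
  - by exists i.
  - by exists i0.
have [f fP] := choice _ U_cnt.
exists (fun x => pickle (idx x, f (idx x) x)) => x y Sx Sy /(pcan_inj pickleK) [e_idx e_f].
have Uy := idxP y Sy; rewrite -e_idx in Uy e_f.
exact: fP (conj Sx (idxP x Sx)) (conj Sy Uy) e_f.
Qed.

Lemma countable_setU S T :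
  countable_set S -> countable_set T -> countable_set (fun x => S x \/ T x).
Proof.
move=> S_cnt T_cnt; apply: (@countable_bigcup bool _ (fun b x => if b then S x else T x)).
- by move=> x [Sx | Tx]; [exists true | exists false].
- by case; [apply: countable_sub S_cnt _ | apply: countable_sub T_cnt _] => x [].
Qed.

Lemma uncountable_setD S T :
  ~ countable_set S -> countable_set T -> ~ countable_set (fun x => S x /\ ~ T x).
Proof.
move=> S_unc T_cnt SD_cnt; apply: S_unc.
apply: countable_sub (countable_setU SD_cnt T_cnt) _ => x Sx.
by case: (classic (T x)); auto.
Qed.

Lemma uncountable_nonempty S : ~ countable_set S -> exists x, S x.
Proof.
move=> S_unc; apply: NNPP => S0; apply: S_unc.
by apply: countable_empty => x Sx; apply: S0; exists x.
Qed.

End Countability.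

(* Codes of the boxes with rational centre and radius [1/(N+1)]; a coordinate is
   coded by a sign and a numerator. *)
Definition rat_code n := ({ffun 'I_n -> bool * nat} * nat)%type.

Definition rat_center n (q : rat_code n) : pt n :=
  fun i => (if (q.1 i).1 then 1 else -1) * INR (q.1 i).2 / INR q.2.+1.

Definition rat_radius n (q : rat_code n) : R := / INR q.2.+1.

Lemma IZR_sign_abs (z : Z) :
  IZR z = (if (0 <=? z)%Z then 1 else -1) * INR (Z.abs_nat z).
Proof.
case: z => [|p|p] /=; first lra.
- by rewrite Rmult_1_l INR_IPR.
- by rewrite INR_IPR; change (IZR (Z.neg p)) with (- IPR p); ring.
Qed.

Lemma exists_rat_ball n (y : pt n) rho : 0 < rho ->
  exists q : rat_code n, sball (rat_center q) (rat_radius q) y /\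
    forall z, sball (rat_center q) (rat_radius q) z -> sball y rho z.
Proof.
move=> rho_gt0; have [N [N_small N_gt0]] := archimed_cor1 (rho / 2) ltac:(lra).
have INR_N_gt0 : 0 < INR N by apply: lt_0_INR.
pose k i : Z := (up (y i * INR N) - 1)%Z.
pose q : rat_code n := ([ffun i => ((0 <=? k i)%Z, Z.abs_nat (k i))], N.-1).
have INR_N : INR q.2.+1 = INR N by congr INR; rewrite /= prednK //; apply/ltP.
have center_q i : rat_center q i = IZR (k i) / INR N.
  by rewrite /rat_center INR_N ffunE /= -IZR_sign_abs.
have radius_q : rat_radius q = / INR N by rewrite /rat_radius INR_N.
have y_q : sball (rat_center q) (rat_radius q) y.
  rewrite /sball radius_q; apply: sd_lt => [|i]; first exact: Rinv_0_lt_compat.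
  have [up_gt up_le] := archimed (y i * INR N).
  rewrite center_q /k minus_IZR.
  have -> : y i - (IZR (up (y i * INR N)) - 1) / INR N
          = (y i * INR N - (IZR (up (y i * INR N)) - 1)) * / INR N by field; lra.
  rewrite Rabs_mult (Rabs_right (/ INR N)); last by left; apply: Rinv_0_lt_compat.
  have : Rabs (y i * INR N - (IZR (up (y i * INR N)) - 1)) < 1 by apply: Rabs_def1; lra.
  have := Rinv_0_lt_compat _ INR_N_gt0; nra.
exists q; split=> // z z_q.
move: y_q z_q; rewrite /sball radius_q sd_sym => y_q z_q.
have := sd_triangle z (rat_center q) y; lra.
Qed.

Definition condensation_point n (S : pt n -> Prop) (y : pt n) : Prop :=
  forall r, 0 < r -> ~ countable_set (fun z => S z /\ sball y r z).

Lemma condensation_point_sub n (S T : pt n -> Prop) y :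
  (forall x, S x -> T x) -> condensation_point S y -> condensation_point T y.
Proof.
move=> ST S_y r r_gt0 T_cnt; apply: (S_y r r_gt0).
by apply: countable_sub T_cnt _ => z [/ST].
Qed.

(* Lindelof argument: the points at which [S] is locally countable are covered by
   countably many rational boxes, each meeting [S] countably. *)
Lemma exists_condensation_point n (S : pt n -> Prop) :
  ~ countable_set S -> exists y, S y /\ condensation_point S y.
Proof.
move=> S_unc; apply: NNPP => no_cond; apply: S_unc.
pose U (q : rat_code n) x := sball (rat_center q) (rat_radius q) x /\
  countable_set (fun z => S z /\ sball (rat_center q) (rat_radius q) z).
apply: (@countable_bigcup _ _ _ U) => [x Sx | q].
- have [r [r_gt0 r_cnt]] : exists r, 0 < r /\
      countable_set (fun z => S z /\ sball x r z).
    apply: NNPP => no_r; apply: no_cond; exists x; split=> // r r_gt0 r_cnt.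
    by apply: no_r; exists r.
  have [q [x_q q_sub]] := exists_rat_ball x r_gt0.
  exists q; split=> //.
  by apply: countable_sub r_cnt _ => z [Sz /q_sub].
- case: (classic (countable_set (fun z => S z /\ sball (rat_center q) (rat_radius q) z)))
    => [q_cnt | q_unc].
  + by apply: countable_sub q_cnt _ => x [Sx [x_q _]].
  + by apply: countable_empty => x [_ [_ q_cnt]].
Qed.

Definition dense_condensation_seq n (C : pt n -> Prop) (d : nat -> pt n) : Prop :=
  forall c r, 0 < r -> ~ countable_set (fun z => C z /\ sball c r z) ->
  exists j, sball c r (d j) /\ condensation_point C (d j).

Lemma exists_dense_condensation_seq n (C : pt n -> Prop) :
  ~ countable_set C ->
  exists d : nat -> pt n, (forall j, C (d j)) /\ dense_condensation_seq C d.
Proof.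
move=> C_unc; have [y0 Cy0] := uncountable_nonempty C_unc.
pose good (q : rat_code n) y :=
  C y /\ sball (rat_center q) (rat_radius q) y /\ condensation_point C y.
have [g gP] : exists g : rat_code n -> pt n,
    forall q, C (g q) /\ ((exists y, good q y) -> good q (g q)).
  apply: (choice (fun q y => C y /\ ((exists y, good q y) -> good q y))) => q.
  case: (classic (exists y, good q y)) => [[y good_y] | no_good].
  - by exists y; split=> [|_] //; case: good_y.
  - by exists y0.
exists (fun j => if unpickle j is Some q then g q else y0); split.
  by move=> j; case: (unpickle j) => [q|] //; case: (gP q).
move=> c r r_gt0 cr_unc.
have [y [[Cy y_cr] y_cond]] := exists_condensation_point cr_unc.
have [q [y_q q_sub]] : exists q : rat_code n, sball (rat_center q) (rat_radius q) y /\
    forall z, sball (rat_center q) (rat_radius q) z -> sball y (r - sd y c) z.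
  by apply: exists_rat_ball; move: y_cr; rewrite /sball; lra.
have y_condC : condensation_point C y by apply: condensation_point_sub y_cond => z [].
have [_ [g_q g_cond]] : good q (g q) by apply: (gP q).2; exists y.
exists (pickle q); rewrite pickleK; split=> //.
have := q_sub _ g_q; have := sd_triangle (g q) y c; rewrite /sball; lra.
Qed.

Lemma Pn_Ln_disjoint n (x : pt n) : Pn x -> Ln x -> False.
Proof. by rewrite /Pn /Ln; lra. Qed.

Section TangentBalls.
Variable m : nat.
Implicit Types a b w x : pt m.+1.
Local Notation wid i := (widen_ord (leqnSn m) i).

Lemma lift_pt_last a e : lift_pt a e ord_max = e.
Proof. by rewrite /lift_pt /= eqxx. Qed.

Lemma lift_pt_widen a e (i : 'I_m) : lift_pt a e (wid i) = a (wid i).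
Proof. by rewrite /lift_pt /= (ltn_eqF (ltn_ord i)). Qed.

(* With [t] the height of [w] and [eta] its horizontal offset from [a], the squared
   distance to the centre [a(r)] is at most [m eta^2 + (r - t)^2 < r^2]. *)
Lemma eball_lift_near a w eta r :
  0 <= eta -> INR m.+1 * eta < w ord_max <= r ->
  (forall i : 'I_m, Rabs (w (wid i) - a (wid i)) <= eta) ->
  eball (lift_pt a r) r w.
Proof.
move=> eta_ge0 [w_high w_le] w_near.
set t := w ord_max in w_high w_le *.
have m_ge0 := pos_INR m; rewrite S_INR in w_high.
set S := \big[Rplus/0]_(i < m) (w (wid i) - lift_pt a r (wid i)) ^ 2.
have S_ge0 : 0 <= S by apply: sumR_ge0 => i; apply: pow2_ge_0.
have S_le : S <= INR m * eta ^ 2.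
  apply: sumR_le_const => i; rewrite lift_pt_widen.
  by rewrite -(pow2_abs (_ - _)); apply: pow_incr; split; [apply: Rabs_pos | apply: w_near].
have h_ge0 : 0 <= (INR m + 1) * eta by apply: Rmult_le_pos; lra.
have S_lt : S + (t - r) ^ 2 < r ^ 2.
  have h_lt : (INR m + 1) * eta * ((INR m + 1) * eta) < t * t.
    by apply: Rmult_le_0_lt_compat.
  have : INR m * eta ^ 2 <= (INR m + 1) * eta * ((INR m + 1) * eta).
    have : 0 <= eta ^ 2 by apply: pow2_ge_0.
    nra.
  have : t * t <= t * (2 * r - t) by apply: Rmult_le_compat_l; lra.
  nra.
rewrite /eball /edist big_ord_recr /= lift_pt_last -/S -/t.
rewrite -[X in _ < X](sqrt_pow2 r); last lra.
by apply: sqrt_lt_1_alt; split; [apply: Rplus_le_le_0_compat; last apply: pow2_ge_0 | lra].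
Qed.

(* The witness is the horizontal midpoint of [a] and [b] at height [Rmin r s]. *)
Lemma tball_meet a b r s :
  0 < r -> 0 < s -> INR m.+1 * sd a b < Rmin r s ->
  exists z, tball a r z /\ tball b s z.
Proof.
move=> r_gt0 s_gt0 ab_close.
have sd_ab := sd_ge0 a b; have r_min := Rmin_l r s; have s_min := Rmin_r r s.
pose z : pt m.+1 := fun i => if (i : nat) == m then Rmin r s else (a i + b i) / 2.
have z_last : z ord_max = Rmin r s by rewrite /z /= eqxx.
have z_widen (i : 'I_m) : z (wid i) = (a (wid i) + b (wid i)) / 2.
  by rewrite /z /= (ltn_eqF (ltn_ord i)).
exists z; split; right; apply: (eball_lift_near (eta := sd a b)) => //;
  rewrite ?z_last; try lra; move=> i; rewrite z_widen;
  have := sd_ge_coord a b (wid i);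
  rewrite /Rabs; do 2 case: Rcase_abs; lra.
Qed.

End TangentBalls.

Section TauTopology.
Variables (m : nat) (A : pt m.+1 -> Prop).

Lemma eball_Pn (c x : pt m.+1) e : e <= c ord_max -> eball c e x -> Pn x.
Proof.
rewrite /eball /Pn /= => e_le x_near.
have := edist_ge_coord x c ord_max.
by rewrite /Rabs; case: Rcase_abs; lra.
Qed.

(* Near points of [P_n] lie Euclidean balls missing [L_n], near points of [A]
   Euclidean balls missing [C], and a tangent ball meets [L_n] only in its base
   point. *)
Lemma tau_closed_sub (C S : pt m.+1 -> Prop) :
  eclosed_in_Ln C -> (forall x, C x -> ~ A x) -> (forall x, S x -> C x) ->
  tau_closed A S.
Proof.
move=> [C_L C_closed] C_nA S_C.
have S_nP x : Pn x -> ~ S x by move=> Px /S_C /C_L; apply: Pn_Ln_disjoint.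
split=> [x /S_C /C_L Lx|]; first by right.
split=> [x [] //|a [[Pa | La] nSa]].
- left; split=> //; exists (lastc a / 2); move: (Pa); rewrite /Pn => a_gt0.
  do 2 (split; first lra); move=> x x_near.
  have Px : Pn x by apply: eball_Pn x_near; move: a_gt0 => /=; lra.
  by split; [left | apply: S_nP].
- case: (classic (A a)) => [Aa | nAa].
  + right; left; do 2 split=> //.
    have [e [e_gt0 e_out]] := C_closed a La (fun Ca => C_nA a Ca Aa).
    exists e; split=> // x x_near Xx; split=> // /S_C Cx.
    exact: e_out x (C_L x Cx) x_near Cx.
  + right; right; do 2 split=> //; exists 1; split=> [|x [-> | x_near]]; first lra.
    * by split=> //; right.
    * have Px : Pn x by apply: eball_Pn x_near; rewrite lift_pt_last; lra.
      by split; [left | apply: S_nP].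
Qed.

Lemma tau_open_tball (U : pt m.+1 -> Prop) a :
  Ln a -> ~ A a -> tau_open A U -> U a ->
  exists e, 0 < e /\ forall x, tball a e x -> U x.
Proof.
move=> La nAa [_ U_open] /U_open [[Pa _] | [[_ [Aa _]] | [_ [_ e_tball]]]] //.
by case: (Pn_Ln_disjoint Pa La).
Qed.

End TauTopology.

Lemma avoid_finite_prefix n (d : nat -> pt n) s y :
  (forall i, (i <= s)%N -> y <> d i) ->
  exists rho, 0 < rho /\ forall z, sball y rho z -> forall i, (i <= s)%N -> z <> d i.
Proof.
move=> y_avoid; exists (\big[Rmin/1]_(i < s.+1) sd (d i) y); split.
  apply: (big_ind (fun v => 0 < v)) => [|*|i _]; [lra | exact: Rmin_pos |].
  by apply: sd_gt0 => di_y; apply: (y_avoid i (ltn_ord i)); rewrite di_y.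
move=> z z_near i le_is z_di; move: z_near; rewrite /sball z_di; apply: Rle_not_lt.
have i_lt : (i < s.+1)%N by [].
by rewrite (bigD1 (Ordinal i_lt)) //=; apply: Rmin_l.
Qed.

Lemma nested_balls_meet n (c : nat -> pt n) (r : nat -> R) :
  (forall s, 0 <= r s) ->
  (forall s z, sd z (c s.+1) <= r s.+1 -> sd z (c s) <= r s) ->
  exists x, forall s, sd x (c s) <= r s.
Proof.
move=> r_ge0 nested1.
have nested s t z : (s <= t)%N -> sd z (c t) <= r t -> sd z (c s) <= r s.
  move=> /subnKC <-; elim: (t - s)%N z => [|k IHk] z; first by rewrite addn0.
  by rewrite addnS => /nested1; apply: IHk.
have lower_le_upper i s k : c s i - r s <= c k i + r k.
  have c_max s' : (s' <= maxn s k)%N -> Rabs (c (maxn s k) i - c s' i) <= r s'.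
    move=> le_s'; apply: Rle_trans (sd_ge_coord _ _ i) _; apply: nested le_s' _.
    by rewrite sd_refl.
  have := c_max s (leq_maxl s k); have := c_max k (leq_maxr s k).
  by rewrite /Rabs; do 2 case: Rcase_abs; lra.
pose E i v := exists s, v = c s i - r s.
have [x xP] : exists x : pt n, forall i, is_lub (E i) (x i).
  apply: (choice (fun i v => is_lub (E i) v)) => i.
  have E_bounded : bound (E i).
    by exists (c 0%N i + r 0%N) => v [s ->]; apply: lower_le_upper.
  have E_nonempty : exists v, E i v by exists (c 0%N i - r 0%N), 0%N.
  by have [v vP] := completeness (E i) E_bounded E_nonempty; exists v.
exists x => s; apply: sd_le => // i; have [x_ub x_lub] := xP i.
have x_ge : c s i - r s <= x i by apply: x_ub; exists s.
have x_le : x i <= c s i + r s by apply: x_lub => v [k ->]; apply: lower_le_upper.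
by rewrite /Rabs; case: Rcase_abs; lra.
Qed.

Definition locally_finite_tballs n (C : pt n -> Prop) (d : nat -> pt n)
    (delta : nat -> R) : Prop :=
  forall y, C y -> (forall j, y <> d j) -> exists e, 0 < e /\ exists k,
    forall j z, tball y e z -> tball (d j) (delta j) z -> exists i, (i < k)%N /\ d i = d j.

Lemma eclosed_in_Ln_approx m (C : pt m.+1 -> Prop) x :
  eclosed_in_Ln C -> (forall eps, 0 < eps -> exists p, C p /\ sball x eps p) -> C x.
Proof.
move=> [C_L C_closed] x_adh.
have Lx : Ln x.
  rewrite /Ln /=; apply: NNPP => x_last.
  have [p [Cp p_near]] := x_adh _ (Rabs_pos_lt _ x_last).
  have := sd_ge_coord p x ord_max; move: (C_L p Cp); rewrite /Ln /= => ->.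
  by rewrite Rminus_0_l Rabs_Ropp; move: p_near; rewrite /sball; lra.
apply: NNPP => nCx; have [e [e_gt0 e_out]] := C_closed x Lx nCx.
have n_gt0 : 0 < INR m.+1 by apply: lt_0_INR; lia.
have [p [Cp p_near]] := x_adh (e / INR m.+1) (Rdiv_lt_0_compat _ _ e_gt0 n_gt0).
apply: (e_out p (C_L p Cp) _ Cp); apply: Rle_lt_trans (edist_le_sd p x) _.
have -> : e = INR m.+1 * (e / INR m.+1) by field; lra.
exact: Rmult_lt_compat_l.
Qed.

Section BaireArgument.
Variables (m : nat) (C : pt m.+1 -> Prop) (d : nat -> pt m.+1) (delta : nat -> R).
Hypotheses (C_closed : eclosed_in_Ln C) (d_dense : dense_condensation_seq C d)
  (delta_gt0 : forall j, 0 < delta j).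

(* If [locally_finite_tballs C d delta] holds, every point of [C] outside the range
   of [d] is locally finite at some level [s]. *)
Definition locally_finite_at_level s y :=
  exists e, / INR s.+1 <= e /\ exists k, (k <= s)%N /\
    forall j z, tball y e z -> tball (d j) (delta j) z -> exists i, (i < k)%N /\ d i = d j.

Lemma not_locally_finite_at_level_near s j z :
  (forall i, (i <= s)%N -> d i <> d j) ->
  INR m.+1 * sd z (d j) < Rmin (/ INR s.+1) (delta j) -> ~ locally_finite_at_level s z.
Proof.
move=> dj_new z_near [e [e_ge [k [k_le tballs_meet]]]].
have e_gt0 := Rlt_le_trans _ _ _ (inv_succ_gt0 s) e_ge.
have [w [w_z w_dj]] : exists w, tball z e w /\ tball (d j) (delta j) w.
  apply: tball_meet e_gt0 (delta_gt0 j) _.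
  apply: Rlt_le_trans z_near _; apply: Rmin_glb; last exact: Rmin_r.
  exact: Rle_trans (Rmin_l _ _) e_ge.
have [i [lt_ik di_dj]] := tballs_meet j w w_z w_dj.
by apply: (dj_new i) => //; apply: leq_trans k_le; apply: ltnW.
Qed.

Lemma new_center s c r :
  0 < r -> ~ countable_set (fun z => C z /\ sball c r z) ->
  exists j mu, 0 < mu /\ condensation_point C (d j) /\
    forall z, sball (d j) mu z -> sball c r z /\ forall i, (i <= s)%N -> z <> d i.
Proof.
move=> r_gt0 cr_unc.
pose D z := exists i, (i <= s)%N /\ z = d i.
have D_cnt : countable_set D.
  by apply: countable_sub (countable_range d) _ => z [i [_ ->]]; exists i.
have [y [[[Cy y_cr] y_nD] y_cond]] :=
  exists_condensation_point (uncountable_setD cr_unc D_cnt).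
have [rho [rho_gt0 rho_avoid]] : exists rho, 0 < rho /\
    forall z, sball y rho z -> forall i, (i <= s)%N -> z <> d i.
  by apply: avoid_finite_prefix => i le_is y_di; apply: y_nD; exists i.
have [mu [mu_gt0 [mu_lt mu_rho]]] : exists mu, 0 < mu /\ mu < r - sd y c /\ mu < rho.
  by apply: exists_pos_lt2 => //; rewrite /sball in y_cr; lra.
have [j [dj_y dj_cond]] : exists j, sball y (mu / 2) (d j) /\ condensation_point C (d j).
  apply: d_dense; first lra.
  move=> y_cnt; apply: (y_cond (mu / 2)); first lra.
  by apply: countable_sub y_cnt _ => z [[[Cz _] _] z_near].
exists j, (mu / 2); do 2 (split; first by [lra | apply: dj_cond]).
move=> z; rewrite /sball in dj_y * => z_near.
have z_y : sd z y < mu by have := sd_triangle z (d j) y; lra.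
split; first by have := sd_triangle z y c; lra.
by apply: rho_avoid; rewrite /sball; lra.
Qed.

Lemma shrink_ball s c r :
  0 < r -> ~ countable_set (fun z => C z /\ sball c r z) ->
  exists c' r', 0 < r' /\ r' <= / INR s.+2 /\
    ~ countable_set (fun z => C z /\ sball c' r' z) /\
    forall z, sd z c' <= r' ->
      sball c r z /\ (forall i, (i <= s)%N -> z <> d i) /\ ~ locally_finite_at_level s z.
Proof.
move=> r_gt0 /(new_center s r_gt0) [j [mu [mu_gt0 [dj_cond dj_ball]]]].
have dj_new i : (i <= s)%N -> d i <> d j.
  move=> le_is di_dj; apply: (dj_ball (d j) _).2 le_is (esym di_dj).
  by rewrite /sball sd_refl.
pose t := Rmin (/ INR s.+1) (delta j).
have t_gt0 : 0 < t by apply: Rmin_pos; [apply: inv_succ_gt0 | apply: delta_gt0].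
have n_gt0 : 0 < INR m.+1 by apply: lt_0_INR; lia.
have [r1 [r1_gt0 [r1_mu r1_le]]] := exists_pos_lt2 mu_gt0 (inv_succ_gt0 s.+1).
have [r' [r'_gt0 [r'_r1 r'_t]]] := exists_pos_lt2 r1_gt0 (Rdiv_lt_0_compat _ _ t_gt0 n_gt0).
exists (d j), r'; do 3 (split; first by [lra | apply: dj_cond]).
move=> z z_near; have [z_cr z_new] : sball c r z /\ forall i, (i <= s)%N -> z <> d i.
  by apply: dj_ball; rewrite /sball; lra.
do 2 (split=> //); apply: not_locally_finite_at_level_near dj_new _.
apply: Rle_lt_trans (Rmult_le_compat_l _ _ _ (pos_INR m.+1) z_near) _; rewrite -/t.
have -> : t = INR m.+1 * (t / INR m.+1) by field; lra.
exact: Rmult_lt_compat_l.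
Qed.

(* Baire category: nested boxes meeting [C] uncountably, the [s]-th of which avoids
   [d 0, ..., d s] and all points locally finite at level [s], shrink to a point of
   [C] outside the range of [d] that is locally finite at no level. *)
Lemma not_locally_finite_tballs : ~ countable_set C -> ~ locally_finite_tballs C d delta.
Proof.
move=> C_unc lf.
have [y0 [_ y0_cond]] := exists_condensation_point C_unc.
pose P s (cr : pt m.+1 * R) := 0 < cr.2 /\ cr.2 <= / INR s.+1 /\
  ~ countable_set (fun z => C z /\ sball cr.1 cr.2 z).
pose Q s (cr cr' : pt m.+1 * R) := forall z, sd z cr'.1 <= cr'.2 ->
  sball cr.1 cr.2 z /\ (forall i, (i <= s)%N -> z <> d i) /\ ~ locally_finite_at_level s z.
have [u uP] : exists u : nat -> pt m.+1 * R, forall s, P s (u s) /\ Q s (u s) (u s.+1).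
  apply: (dependent_choice (x0 := (y0, 1))) => [|s [c r] [r_gt0 [_ cr_unc]]].
    by rewrite /P /= Rinv_1; do 2 (split; first lra); apply: y0_cond; lra.
  have [c' [r' [r'_gt0 [r'_le [c'r'_unc c'r'_sub]]]]] := shrink_ball s r_gt0 cr_unc.
  by exists (c', r').
have [x x_in] : exists x, forall s, sd x (u s).1 <= (u s).2.
  apply: nested_balls_meet => [s | s z /(uP s).2 [z_in _]].
  - by case: (uP s) => [[r_gt0 _] _]; lra.
  - by rewrite /sball in z_in; lra.
have x_Q s := (uP s).2 x (x_in s.+1).
have Cx : C x.
  apply: eclosed_in_Ln_approx C_closed _ => eps eps_gt0.
  have [s s_lt] := exists_inv_succ_lt (Rdiv_lt_0_compat _ _ eps_gt0 Rlt_0_2).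
  have [_ [r_le cr_unc]] := (uP s).1.
  have [p [Cp p_in]] := uncountable_nonempty cr_unc.
  exists p; split=> //; rewrite /sball sd_sym.
  by have := sd_triangle x (u s).1 p; rewrite /sball sd_sym in p_in; have := x_in s; lra.
have x_nd j : x <> d j by apply: (x_Q j).2.1.
have [e [e_gt0 [k k_meet]]] := lf x Cx x_nd.
have [s0 s0_lt] := exists_inv_succ_lt e_gt0.
apply: (x_Q (maxn s0 k)).2.2; exists e; split.
  by apply: Rle_trans (inv_succ_le (leq_maxl s0 k)) _; lra.
by exists k; split=> //; apply: leq_maxr.
Qed.

End BaireArgument.

Section TangentBallSeparation.
Variables (m : nat) (A C : pt m.+1 -> Prop) (d : nat -> pt m.+1).
Hypotheses (C_closed : eclosed_in_Ln C) (C_nA : forall x, C x -> ~ A x)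
  (d_C : forall j, C (d j)).

Let d_L j : Ln (d j) := C_closed.1 _ (d_C j).

Lemma normal_locally_finite_tballs :
  tau_normal A -> exists delta, (forall j, 0 < delta j) /\ locally_finite_tballs C d delta.
Proof.
move=> normal; pose D z := exists j, z = d j.
have D_closed : tau_closed A D by apply: tau_closed_sub C_closed C_nA _ => z [j ->].
have CD_closed : tau_closed A (fun z => C z /\ ~ D z).
  by apply: tau_closed_sub C_closed C_nA _ => z [].
have [U [V [U_open [V_open [D_U [CD_V UV]]]]]] := normal _ _ D_closed CD_closed
  (fun z Dz CDz => CDz.2 Dz).
have [delta deltaP] : exists delta, forall j,
    0 < delta j /\ forall x, tball (d j) (delta j) x -> U x.
  apply: (choice (fun j e => 0 < e /\ forall x, tball (d j) e x -> U x)) => j.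
  by apply: tau_open_tball (d_L j) (C_nA (d_C j)) U_open _; apply: D_U; exists j.
exists delta; split=> [j | y Cy y_nd]; first exact: (deltaP j).1.
have [e [e_gt0 e_V]] : exists e, 0 < e /\ forall x, tball y e x -> V x.
  apply: tau_open_tball (C_closed.1 _ Cy) (C_nA Cy) V_open _.
  by apply: CD_V; split=> // [[j /y_nd]].
exists e; split=> //; exists 0%N => j z /e_V Vz /(deltaP j).2 Uz.
by case: (UV z Uz Vz).
Qed.

(* Cover [X_n] by the complements of the tails [{d j | j >= k}]: members of a
   locally finite refinement near [y] only contain finitely many [d j]. *)
Lemma countably_paracompact_locally_finite_tballs :
  tau_countably_paracompact A ->
  exists delta, (forall j, 0 < delta j) /\ locally_finite_tballs C d delta.
Proof.
move=> paracompact.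
pose tail k z := (exists j, z = d j) /\ forall i, (i < k)%N -> z <> d i.
pose U k z := Xn z /\ ~ tail k z.
have U_open k : tau_open A (U k).
  by apply: (tau_closed_sub C_closed C_nA _).2 => z [[j ->]].
have U_cover x : Xn x -> exists k, U k x.
  move=> Xx; case: (classic (exists j, x = d j)) => [[j x_dj] | x_nd].
  - by exists j.+1; split=> //; case=> _ /(_ j (ltnSn j) x_dj).
  - by exists 0%N; split=> //; case=> /x_nd.
have [W [W_open [W_refines [W_cover W_lf]]]] := paracompact U U_open U_cover.
have [delta deltaP] : exists delta, forall j, 0 < delta j /\
    exists V, W V /\ forall x, tball (d j) (delta j) x -> V x.
  apply: (choice (fun j e =>
    0 < e /\ exists V, W V /\ forall x, tball (d j) e x -> V x)) => j.
  have [V [WV Vdj]] := W_cover _ (or_intror (d_L j)).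
  have [e [e_gt0 e_V]] := tau_open_tball (d_L j) (C_nA (d_C j)) (W_open V WV) Vdj.
  by exists e; split=> //; exists V.
exists delta; split=> [j | y Cy y_nd]; first exact: (deltaP j).1.
have [O [O_open [Oy [l l_meets]]]] := W_lf y (or_intror (C_closed.1 _ Cy)).
have [e [e_gt0 e_O]] := tau_open_tball (C_closed.1 _ Cy) (C_nA Cy) O_open Oy.
have [K KP] : exists K, forall V, List.In V l ->
    exists k, (k <= K)%N /\ (W V -> forall x, V x -> U k x).
  apply: list_bound => V _; case: (classic (W V)) => [/W_refines [k Vk] | nWV].
  - by exists k.
  - by exists 0%N.
exists e; split=> //; exists K => j z z_y z_dj.
have [_ [V [WV e_V]]] := deltaP j.
have l_V : List.In V l by apply: l_meets WV _; exists z; split; [apply: e_O | apply: e_V].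
have [k [le_kK Vk]] := KP V l_V.
have [_ not_tail] := Vk WV (d j) (e_V _ (or_introl erefl)).
apply: NNPP => no_i; apply: not_tail; split=> [|i lt_ik dj_di]; first by exists j.
by apply: no_i; exists i; split; [apply: leq_trans lt_ik le_kK | rewrite dj_di].
Qed.

End TangentBallSeparation.

Theorem mainTheorem19 (n : nat) (A : pt n -> Prop) :
  (2 <= n)%N ->
  (forall x, A x -> Ln x) ->
  (tau_normal A \/ tau_countably_paracompact A) ->
  ~ (exists C : pt n -> Prop,
       eclosed_in_Ln C /\
       (forall x, C x -> Ln x /\ ~ A x) /\
       ~ countable_set C).
Proof.
case: n A => [|m] A // _ _ normal_or_paracompact [C [C_closed [C_LnA C_unc]]].
have C_nA x : C x -> ~ A x by move=> /C_LnA [].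
have [d [d_C d_dense]] := exists_dense_condensation_seq C_unc.
have [delta [delta_gt0 lf]] :
    exists delta, (forall j, 0 < delta j) /\ locally_finite_tballs C d delta.
  case: normal_or_paracompact => [normal | paracompact].
  - exact: normal_locally_finite_tballs C_closed C_nA d_C normal.
  - exact: countably_paracompact_locally_finite_tballs C_closed C_nA d_C paracompact.
exact: not_locally_finite_tballs C_closed d_dense delta_gt0 C_unc lf.
Qed.
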